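(* Let $\pi\colon G_1\to G_2$ be an epimorphism of pro-$p$ groups which induces an isomorphism $G_1^{[2]}\to G_2^{[2]}$, where $G_2^{[2]}\cong(\mathbb{Z}/q)^I$ for some set $I$, and suppose that $H^2(G_2)=H^2(G_2)_{\mathrm{dec}}$. Then $\pi$ is an isomorphism if and only if the induced map $(G_1)_{[3]}\to(G_2)_{[3]}$ is an isomorphism.
   Context: $p$ prime, $q=p^s$; $H^i(G)=H^i(G,\mathbb{Z}/q)$ continuous with trivial action; $H^2(G)_{\mathrm{dec}}$ is the image of the cup product $H^1(G)\otimes H^1(G)\to H^2(G)$. $G^{(2)}=G^q[G,G]$, $G^{[2]}=G/G^{(2)}$; $\delta=1$ if $p>2$, $\delta=2$ if $p=2$; $G_{(3)}=G^{\delta q}[G^{(2)},G]$ and $G_{[3]}=G/G_{(3)}$. *)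

From HB Require Import structures.
From mathcomp Require Import all_boot all_order all_algebra.
From mathcomp Require Import all_classical all_reals all_analysis.

Set Implicit Arguments.
Unset Strict Implicit.
Unset Printing Implicit Defensive.

Import GRing.Theory.
Local Open Scope classical_set_scope.

#[short(type="topGroupCarrier")]
HB.structure Definition TopGroupCarrier :=
  {G of monoid.Group G & Topological G}.

Section Defs.
Variable G : topGroupCarrier.
Local Open Scope group_scope.

Definition topological_group : Prop :=
  continuous (fun xy : G * G => xy.1 * xy.2) /\ continuous (fun x : G => x^-1).

Definition is_subgroup (H : set G) : Prop :=
  H 1 /\ (forall x y, H x -> H y -> H (x * y^-1)).

Definition is_normal (H : set G) : Prop :=
  forall x g, H x -> H (g^-1 * x * g).

Definition gen_subgroup (S : set G) : set G :=
  [set x | forall H, is_subgroup H -> S `<=` H -> H x].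

Definition cl_gen (S : set G) : set G := closure (gen_subgroup S).

(* U has finite index p^k for some k: there are p^k left cosets r_i U
   partitioning G. *)
Definition p_power_index (p : nat) (U : set G) : Prop :=
  exists (k : nat) (r : 'I_(p ^ k)%N -> G),
    forall x : G, exists! i : 'I_(p ^ k)%N, U ((r i)^-1 * x).

(* profinite group (compact, Hausdorff, totally disconnected topological group)
   in which every open normal subgroup has p-power index, i.e. G is an inverse
   limit of finite p-groups. *)
Definition pro_p_group (p : nat) : Prop :=
  [/\ topological_group, compact [set: G], hausdorff_space G,
      totally_disconnected [set: G] &
      forall U : set G, open U -> is_subgroup U -> is_normal U ->
        p_power_index p U].

Definition frat2 (q : nat) : set G :=
  cl_gen ([set x | exists g : G, x = g ^+ q] `|`
          [set x | exists g h : G, x = [~ g, h]]).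

Definition delta (p : nat) : nat := if p == 2%N then 2%N else 1%N.

Definition frat3 (p q : nat) : set G :=
  cl_gen ([set x | exists g : G, x = g ^+ (delta p * q)] `|`
          [set x | exists g h : G, frat2 q g /\ x = [~ g, h]]).

(* continuity of a map into Z/q with the discrete topology *)
Definition cont_Zq (q : nat) (f : G -> 'Z_q) : Prop :=
  forall a : 'Z_q, open (f @^-1` [set a]).

Definition cont2_Zq (q : nat) (f : G * G -> 'Z_q) : Prop :=
  forall a : 'Z_q, open (f @^-1` [set a]).

Definition H1_elt (q : nat) (chi : G -> 'Z_q) : Prop :=
  cont_Zq chi /\ (forall g h, chi (g * h) = (chi g + chi h)%R).

(* continuous inhomogeneous 2-cocycles with trivial action *)
Definition cocycle2 (q : nat) (c : G -> G -> 'Z_q) : Prop :=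
  cont2_Zq (fun xy => c xy.1 xy.2) /\
  (forall g h k, (c h k - c (g * h)%g k + c g (h * k)%g - c g h)%R = 0%R).

(* H^2(G) = H^2(G)_dec: every continuous 2-cocycle is cohomologous to a
   finite sum of cup products chi_i \cup psi_i, (chi \cup psi)(g,h) =
   chi(g) psi(h), of elements of H^1(G); the coboundary of a continuous
   1-cochain b is (db)(g,h) = b(h) - b(gh) + b(g). *)
Definition H2_decomposable (q : nat) : Prop :=
  forall c : G -> G -> 'Z_q, cocycle2 c ->
    exists (n : nat) (chi psi : 'I_n -> G -> 'Z_q) (b : G -> 'Z_q),
      (forall i, H1_elt (chi i)) /\ (forall i, H1_elt (psi i)) /\ cont_Zq b /\
      forall g h, c g h =
        (\sum_(i < n) chi i g * psi i h + (b h - b (g * h)%g + b g))%R.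

End Defs.

Section Maps.
Local Open Scope group_scope.
Variables G1 G2 : topGroupCarrier.

Definition group_hom (f : G1 -> G2) : Prop :=
  forall x y, f (x * y) = f x * f y.

Definition epimorphism (f : G1 -> G2) : Prop :=
  [/\ group_hom f, continuous f & forall y, exists x, f x = y].

Definition isomorphism (f : G1 -> G2) : Prop :=
  group_hom f /\ continuous f /\
  exists g : G2 -> G1, [/\ continuous g, cancel f g & cancel g f].

(* the map G1/N1 -> G2/N2, x N1 |-> f(x) N2, is well defined and bijective *)
Definition induces_iso (f : G1 -> G2) (N1 : set G1) (N2 : set G2) : Prop :=
  [/\ (forall x x', N1 (x^-1 * x') -> N2 ((f x)^-1 * f x')),
      (forall x x', N2 ((f x)^-1 * f x') -> N1 (x^-1 * x')) &
      (forall y, exists x, N2 ((f x)^-1 * y))].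
End Maps.

(* G^[2] = G/G^(2) is isomorphic (as a profinite group) to (Z/q)^I:
   there is a continuous surjective homomorphism G -> (Z/q)^I (product
   topology, Z/q discrete, i.e. every coordinate is continuous) with kernel
   exactly G^(2). *)
Definition quot2_free (G : topGroupCarrier) (q : nat) : Prop :=
  exists (I : Type) (phi : G -> I -> 'Z_q),
    [/\ (forall i, cont_Zq (fun g => phi g i)),
        (forall g h, phi (g * h)%g = (fun i => phi g i + phi h i)%R),
        (forall y : I -> 'Z_q, exists g, phi g = y) &
        (forall g, phi g = (fun _ => 0%R) <-> frat2 q g)].

From mathcomp Require Import all_boot all_order all_algebra all_fingroup all_solvable.
From mathcomp Require Import all_classical all_reals all_analysis.
From mathcomp Require Import ring.

(* If [pi] is an isomorphism it matches the filtrations. Conversely, assume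
   that [ker pi] lies in [G1_(3)] and that [1 <> n0] is in [ker pi]. Some open
   normal subgroup [W] of [G1] avoids [n0], so the image of [ker pi] in the
   finite p-group [G1 / W] is a nontrivial normal subgroup; it carries a
   nonzero [Z/q]-valued character [beta] invariant under conjugation by
   [G1 / W]. Extending [beta] along coset representatives gives a locally
   constant [T : G1 -> Z/q] with [T (x n) = T x + T n = T (n x)] for [n] in
   [ker pi], so [(x, y) |-> T y - T (x y) + T x] descends to a continuous
   2-cocycle of [G2]. Since [H^2(G2)] is decomposable, [T] differs from some
   [b \o pi] by a cochain whose coboundary is a sum of cup products of
   characters, and such a cochain vanishes on [G1_(3)]. Hence [T] vanishes on
   [ker pi], contradicting [beta <> 0]. *)

Set Implicit Arguments.
Unset Strict Implicit.
Unset Printing Implicit Defensive.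

Import GRing.Theory.
Local Open Scope classical_set_scope.

Section TopologicalGroup.
Local Open Scope group_scope.
Variable G : topGroupCarrier.
Hypothesis tgG : topological_group G.

Lemma cvg_mulg (T : Type) (F : set_system T) (FF : Filter F) (f g : T -> G)
    (a b : G) :
  f x @[x --> F] --> a -> g x @[x --> F] --> b -> f x * g x @[x --> F] --> a * b.
Proof.
move=> fa gb; apply: (@continuous2_cvg _ _ _ _ _ FF f g (fun u v => u * v)) => //.
exact: (tgG.1 (a, b)).
Qed.

Lemma cvg_invg (T : Type) (F : set_system T) (FF : Filter F) (f : T -> G) (a : G) :
  f x @[x --> F] --> a -> (f x)^-1 @[x --> F] --> a^-1.
Proof. by move=> fa; apply: cvg_comp fa _; exact: tgG.2. Qed.

Lemma continuous_mulgl (c : G) : continuous (fun y : G => c * y).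
Proof. by move=> y; apply: cvg_mulg => //; exact: cvg_cst. Qed.

Lemma continuous_mulgr (c : G) : continuous (fun y : G => y * c).
Proof. by move=> y; apply: cvg_mulg => //; exact: cvg_cst. Qed.

Lemma open_lcoset (x : G) (U : set G) : open U -> open [set y | U (x^-1 * y)].
Proof.
by move=> oU; exact ((continuousP (fun y : G => x^-1 * y)).1 (@continuous_mulgl x^-1) U oU).
Qed.

End TopologicalGroup.

Section Subgroups.
Local Open Scope group_scope.
Variable G : topGroupCarrier.
Implicit Types (H S : set G) (x y : G).

Lemma subgroup1 H : is_subgroup H -> H 1.
Proof. by case. Qed.

Lemma subgroupV H x : is_subgroup H -> H x -> H x^-1.
Proof. by move=> [H1 HM] Hx; have := HM _ _ H1 Hx; rewrite mul1g. Qed.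

Lemma subgroupM H x y : is_subgroup H -> H x -> H y -> H (x * y).
Proof.
by move=> sH Hx Hy; have := sH.2 _ _ Hx (subgroupV sH Hy); rewrite invgK.
Qed.

Lemma gen_subgroupP S : is_subgroup (gen_subgroup S).
Proof.
split=> [K [] //|x y Sx Sy K sK SK].
by apply: sK.2; [exact: Sx | exact: Sy].
Qed.

Lemma sub_gen_subgroup S : S `<=` gen_subgroup S.
Proof. by move=> x Sx K _ /(_ x Sx). Qed.

Lemma gen_subgroup_min S H : is_subgroup H -> S `<=` H -> gen_subgroup S `<=` H.
Proof. by move=> sH SH x /(_ H sH SH). Qed.

Lemma cl_gen1 S : cl_gen S 1.
Proof. by apply: subset_closure; exact: subgroup1 (gen_subgroupP S). Qed.

Lemma cl_gen_min S H : closed H -> is_subgroup H -> S `<=` H -> cl_gen S `<=` H.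
Proof.
by move=> cH sH SH; rewrite (closure_id H).1 //; apply: closureS; exact: gen_subgroup_min.
Qed.

Lemma open_subgroup_nbhs1 H : topological_group G ->
  is_subgroup H -> nbhs 1 H -> open H.
Proof.
move=> tgG sH H1; rewrite openE => h Hh.
have : nbhs h [set y | H (h^-1 * y)].
  by apply: (@continuous_mulgl G tgG h^-1 h H); rewrite /= mulVg.
by apply: filterS => y /(subgroupM sH Hh); rewrite mulKVg.
Qed.

End Subgroups.

Section Homomorphisms.
Local Open Scope group_scope.
Variables (G H : topGroupCarrier) (f : G -> H).
Hypothesis homf : group_hom f.

Lemma group_hom1 : f 1 = 1.
Proof. by apply: (mulgI (f 1)); rewrite -homf !mulg1. Qed.

Lemma group_homV x : f x^-1 = (f x)^-1.
Proof. by apply: (mulgI (f x)); rewrite -homf !mulgV group_hom1. Qed.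

Lemma group_homX x n : f (x ^+ n) = f x ^+ n.
Proof. by elim: n => [|n IH]; rewrite ?group_hom1 // !expgS homf IH. Qed.

Lemma group_homR x y : f [~ x, y] = [~ f x, f y].
Proof. by rewrite /commg /conjg !homf !group_homV. Qed.

Lemma kernel_subgroup : is_subgroup [set x | f x = 1].
Proof.
split=> [|x y /= fx fy]; first exact: group_hom1.
by rewrite homf group_homV fx fy invg1 mulg1.
Qed.

Lemma kernel_normal : is_normal [set x | f x = 1].
Proof. by move=> x g /= fx; rewrite !homf group_homV fx mulg1 mulVg. Qed.

Lemma cl_gen_hom (S : set G) (S' : set H) : continuous f ->
  (forall x, S x -> S' (f x)) -> forall x, cl_gen S x -> cl_gen S' (f x).
Proof.
move=> cf SS'.
have sub : gen_subgroup S `<=` f @^-1` gen_subgroup S'.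
  apply: gen_subgroup_min => [|x /SS' /sub_gen_subgroup //].
  split=> [|x y /= Sx Sy]; first by rewrite /= group_hom1; exact: subgroup1 (gen_subgroupP S').
  by rewrite homf group_homV; exact: (gen_subgroupP S').2.
have cP : closed (f @^-1` cl_gen S').
  by apply: preimage_closed => //; exact: closed_closure.
have sub' : gen_subgroup S `<=` f @^-1` cl_gen S'.
  by move=> x /sub Sx; exact: subset_closure.
by move=> x /(closureS sub'); rewrite -(closure_id _).1.
Qed.

Lemma frat2_hom q : continuous f -> forall x, frat2 q x -> frat2 q (f x).
Proof.
move=> cf; apply: cl_gen_hom => // x [[g ->]|[g [h ->]]].
  by left; exists (f g); rewrite group_homX.
by right; exists (f g), (f h); rewrite group_homR.
Qed.

Lemma frat3_hom p q : continuous f -> forall x, frat3 p q x -> frat3 p q (f x).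
Proof.
move=> cf; apply: cl_gen_hom => // x [[g ->]|[g [h [g2 ->]]]].
  by left; exists (f g); rewrite group_homX.
by right; exists (f g), (f h); rewrite group_homR; split=> //; exact: frat2_hom.
Qed.

End Homomorphisms.

Section QuasiComponent.
Variable T : topologicalType.
Hypotheses (cT : compact [set: T]) (hT : hausdorff_space T).

Lemma closed_disjoint_separation (A B : set T) :
  closed A -> closed B -> A `&` B = set0 ->
  exists U V, [/\ open U, open V, A `<=` U, B `<=` V & U `&` V = set0].
Proof.
move=> cA cB AB.
have : set_nbhs A (~` B).
  apply/set_nbhsP; exists (~` B); split=> //; first exact: closed_openC.
  by move=> y Ay By; have : (A `&` B) y by []; rewrite AB.
move=> /(compact_normal hT cT cA) [V /set_nbhsP [U [oU AU UV]] clV].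
exists U, (~` closure V); split=> //.
- exact/closed_openC/closed_closure.
- by move=> y By /clV.
- by apply/seteqP; split=> // y [/UV Vy]; apply; exact: subset_closure.
Qed.

Definition quasi_component (x : T) : set T :=
  \bigcap_(C in [set C | clopen C /\ C x]) C.

Lemma clopenI_cover (C U V : set T) : clopen C -> open U -> open V ->
  U `&` V = set0 -> C `<=` U `|` V -> clopen (C `&` U).
Proof.
move=> [oC cC] oU oV UV CUV; split; first exact: openI.
have -> : C `&` U = C `&` ~` V.
  apply/seteqP; split=> y [Cy Uy]; split=> //.
    by move=> Vy; have : (U `&` V) y by []; rewrite UV.
  by case: (CUV y Cy).
by apply: closedI cC _; exact: open_closedC.
Qed.

Variable x : T.
Local Notation Q := (quasi_component x).

Lemma quasi_component_clopen_sub (U : set T) : open U -> Q `<=` U ->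
  exists C, [/\ clopen C, C x & C `<=` U].
Proof.
move=> oU QU; apply: contrapT => noC.
pose F := filter_from [set C | clopen C /\ C x] (fun C => C `&` ~` U).
have FF : Filter F.
  apply: filter_from_filter; first by exists setT; split=> //; exact: clopenT.
  move=> C1 C2 [cC1 C1x] [cC2 C2x]; exists (C1 `&` C2); first by split; [exact: clopenI|].
  by move=> y [[? ?] ?].
have PF : ProperFilter F.
  apply: filter_from_proper => C [cC Cx]; apply: contrapT => /nonemptyPn CU.
  apply: noC; exists C; split=> // y Cy; apply: contrapT => Uy.
  by have : (C `&` ~` U) y by []; rewrite CU.
have FU : F (~` U) by exists setT; [split=> //; exact: clopenT | move=> y []].
have cU : compact (~` U) by apply: subclosed_compact cT _; [exact: open_closedC|].
have [y [Uy cly]] := cU F PF FU.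
apply: Uy; apply: QU => C [cC Cx]; apply: contrapT => Cy.
have /cly : F (C `&` ~` U) by exists C.
have : nbhs y (~` C) by apply: open_nbhs_nbhs; split=> //; exact: closed_openC cC.2.
by move=> nC /(_ _ nC) [z [[Cz _] /(_ Cz)]].
Qed.

Lemma quasi_component_open_split (U V : set T) : open U -> open V ->
  U `&` V = set0 -> Q `<=` U `|` V -> Q `<=` U \/ Q `<=` V.
Proof.
move=> oU oV UV QUV.
have [C [cC Cx CUV]] := quasi_component_clopen_sub (openU oU oV) QUV.
have QC D : clopen (C `&` D) -> D x -> Q `<=` D.
  by move=> cD Dx y Qy; have [] := Qy (C `&` D) (conj cD (conj Cx Dx)).
have [Ux|Vx] := CUV x Cx; [left|right]; apply: QC => //.
  exact: (clopenI_cover cC oU oV).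
by apply: (clopenI_cover cC oV oU); rewrite 1?setIC 1?setUC.
Qed.

Lemma connected_quasi_component : connected Q.
Proof.
move=> B [b Bb] [P oP BP] [K cK BK].
have QB : B `<=` Q by rewrite BP => y [].
have cQ : closed Q by apply: closed_bigI => C [[]].
pose B' := Q `&` ~` P.
have [U [V [oU oV BU B'V UV]]] : exists U V,
    [/\ open U, open V, B `<=` U, B' `<=` V & U `&` V = set0].
  apply: closed_disjoint_separation; first by rewrite BK; exact: closedI.
    by apply: closedI => //; exact: open_closedC.
  by apply/seteqP; split=> // y [+ [_]]; rewrite BP => -[].
have QUV : Q `<=` U `|` V.
  move=> y Qy; have [Py|nPy] := pselect (P y); [left|right].
    by apply: BU; rewrite BP.
  exact: B'V.
have UV0 y : U y -> V y -> False by move=> Uy Vy; have : (U `&` V) y by []; rewrite UV.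
case: (quasi_component_open_split oU oV UV QUV) => [QU|QV].
  apply/seteqP; split=> // y Qy; rewrite BP; split=> //.
  by apply: contrapT => nPy; apply: (UV0 y (QU y Qy)); exact: B'V.
by exfalso; apply: (UV0 b (BU b Bb)); exact: QV (QB b Bb).
Qed.

End QuasiComponent.

Lemma totally_disconnected_zero_dimensional (T : topologicalType) :
  compact [set: T] -> hausdorff_space T -> totally_disconnected [set: T] ->
  zero_dimensional T.
Proof.
move=> cT hT td x y /eqP xy; apply: contrapT => nC; apply: xy.
have Qy : quasi_component x y.
  by move=> C [cC Cx]; apply: contrapT => nCy; apply: nC; exists C.
have Qx : quasi_component x x by move=> C [].
have := @connected_component_max _ [set: T] _ x Qx (@subsetT _ _)
  (connected_quasi_component cT hT (x:=x)) y Qy.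
by rewrite td.
Qed.

Section OpenNormalSubgroups.
Local Open Scope group_scope.
Variable G : topGroupCarrier.
Hypotheses (tgG : topological_group G) (cG : compact [set: G]).

Lemma tube_nbhs1 (K O : set G) (f : G -> G -> G) : compact K -> open O ->
  (forall k, K k -> {for (k, 1), continuous (fun kv : G * G => f kv.1 kv.2)}) ->
  (forall k, K k -> O (f k 1)) ->
  nbhs 1 [set v | forall k, K k -> O (f k v)].
Proof.
move=> cK oO cf Of.
apply: ((compact_near_coveringP K).1 cK G (nbhs 1) (fun v k => O (f k v))) => k Kk.
apply: (cf k Kk); apply: open_nbhs_nbhs; split=> //; exact: Of.
Qed.

(* The right stabilizer of a compact [C] is a neighbourhood of [1] by the tube
   lemma. *)
Lemma open_subgroup_sub_clopen (C : set G) : clopen C -> C 1 ->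
  exists H, [/\ open H, is_subgroup H & H `<=` C].
Proof.
move=> [oC clC] C1; have cC : compact C := subclosed_compact clC cG (@subsetT _ _).
pose H := [set g | forall c, C c -> C (c * g) /\ C (c * g^-1)].
have sH : is_subgroup H.
  split=> [c Cc|g h Hg Hh c Cc]; first by rewrite invg1 mulg1.
  rewrite invMg invgK !mulgA; split; first exact: (Hh _ (Hg _ Cc).1).2.
  exact: (Hg _ (Hh _ Cc).1).2.
exists H; split=> //; last by move=> g /(_ 1 C1) [+ _]; rewrite mul1g.
apply: open_subgroup_nbhs1 => //.
have nV1 : nbhs 1 [set v | forall c, C c -> C (c * v)].
  apply: tube_nbhs1 => // [k _|k Ck]; last by rewrite mulg1.
  by apply: cvg_mulg => //; [exact: cvg_fst | exact: cvg_snd].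
have nV2 : nbhs 1 [set v | forall c, C c -> C (c * v^-1)].
  apply: tube_nbhs1 => // [k _|k Ck]; last by rewrite invg1 mulg1.
  apply: cvg_mulg => //; [exact: cvg_fst | apply: cvg_invg => //; exact: cvg_snd].
apply: filterS (filterI nV1 nV2) => g [V1g V2g] c Cc.
by split; [exact: V1g | exact: V2g].
Qed.

Lemma open_normal_core (H : set G) : open H -> is_subgroup H ->
  exists W, [/\ open W, is_subgroup W, is_normal W & W `<=` H].
Proof.
move=> oH sH; pose W := [set g | forall y, H (y^-1 * g * y)].
have sW : is_subgroup W.
  split=> [y|g h Wg Wh y]; first by rewrite mulg1 mulVg; exact: subgroup1.
  have -> : y^-1 * (g * h^-1) * y = (y^-1 * g * y) * (y^-1 * h * y)^-1.
    by rewrite !invMg !invgK !mulgA mulgK.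
  exact: sH.2.
exists W; split=> //.
- apply: open_subgroup_nbhs1 => //.
  have nH : nbhs 1 [set v | forall y, [set: G] y -> H (y^-1 * v * y)].
    apply: tube_nbhs1 => // [k _|k _]; last by rewrite mulg1 mulVg; exact: subgroup1.
    apply: cvg_mulg => //; last exact: cvg_fst.
    by apply: cvg_mulg => //; [apply: cvg_invg => //; exact: cvg_fst | exact: cvg_snd].
  by apply: filterS nH => g Hg y; exact: Hg.
- move=> g z Wg y; have := Wg (z * y); by rewrite invMg !mulgA.
- by move=> g /(_ 1); rewrite invg1 mul1g mulg1.
Qed.

Lemma open_normal_subgroup_sep : hausdorff_space G ->
  totally_disconnected [set: G] -> forall n : G, n <> 1 ->
  exists W, [/\ open W, is_subgroup W, is_normal W & ~ W n].
Proof.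
move=> hG td n /eqP n1; rewrite eq_sym in n1.
have [C [cC C1 Cn]] := totally_disconnected_zero_dimensional cG hG td n1.
have [H [oH sH HC]] := open_subgroup_sub_clopen cC C1.
have [W [oW sW nW WH]] := open_normal_core oH sH.
by exists W; split=> // /WH /HC.
Qed.

End OpenNormalSubgroups.

Lemma closed_image_compact (X Y : topologicalType) (f : X -> Y) (A : set X) :
  continuous f -> compact [set: X] -> hausdorff_space Y -> closed A ->
  closed (f @` A).
Proof.
move=> cf cX hY cA; apply: compact_closed => //.
apply: continuous_compact; first exact: continuous_subspaceT.
exact: subclosed_compact cA cX _.
Qed.

Section Epimorphism.
Local Open Scope group_scope.
Variables (G1 G2 : topGroupCarrier) (pi : G1 -> G2).
Hypotheses (tg1 : topological_group G1) (cG1 : compact [set: G1])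
  (hG2 : hausdorff_space G2).
Hypotheses (hom : group_hom pi) (cpi : continuous pi)
  (surj : forall y, exists x, pi x = y).

Lemma open_saturation (U : set G1) : open U -> open (pi @^-1` (pi @` U)).
Proof.
move=> oU.
have -> : pi @^-1` (pi @` U) =
    \bigcup_(n in [set n | pi n = 1]) [set y | U (y * n^-1)].
  apply/seteqP; split=> [x /= [u Uu pux]|x [n /= pn Uxn]].
    exists (u^-1 * x); first by rewrite /= hom group_homV // pux mulVg.
    by rewrite /= invMg invgK mulgA mulgV mul1g.
  by exists (x * n^-1) => //; rewrite hom group_homV // pn invg1 mulg1.
apply: bigcup_open => n _.
exact ((continuousP (fun y : G1 => y * n^-1)).1 (continuous_mulgr tg1 (c:=n^-1)) U oU).
Qed.

Lemma epimorphism_open (U : set G1) : open U -> open (pi @` U).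
Proof.
move=> oU.
have -> : pi @` U = ~` (pi @` ~` (pi @^-1` (pi @` U))).
  apply/seteqP; split=> [y Uy [x /= nUx pxy]|y nUy].
    by apply: nUx; rewrite pxy.
  have [x pxy] := surj y; rewrite -pxy; apply: contrapT => nUx.
  by apply: nUy; exists x.
by rewrite openC; apply: closed_image_compact => //; exact/open_closedC/open_saturation.
Qed.

Lemma injective_epimorphism_iso : injective pi -> isomorphism pi.
Proof.
move=> ipi; do 2!split=> //.
have ex_pre y : exists x, pi x == y by have [x <-] := surj y; exists x.
pose g y := xchoose (ex_pre y).
have gK : cancel g pi by move=> y; exact/eqP/(xchooseP (ex_pre y)).
have piK : cancel pi g by move=> x; apply: ipi; rewrite gK.
exists g; split=> //; apply/continuousP => A oA.
have -> : g @^-1` A = pi @` A.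
  by apply/seteqP; split=> [y Ay|_ [x Ax <-]]; [exists (g y) | rewrite /= piK].
exact: epimorphism_open.
Qed.

End Epimorphism.

Lemma isomorphism_induces_frat3 (G H : topGroupCarrier) (f : G -> H) p q :
  isomorphism f -> induces_iso f (frat3 p q) (frat3 p q).
Proof.
move=> [homf [cf [g [cg fK gK]]]].
have homg : group_hom g by move=> x y; apply: (can_inj fK); rewrite homf !gK.
split=> [x x' N|x x' /(frat3_hom homg cg)|y].
- by rewrite -group_homV // -homf; exact: frat3_hom.
- by rewrite homg group_homV // !fK.
- by exists (g y); rewrite gK mulVg; exact: cl_gen1.
Qed.

Section ContinuousZq.
Local Open Scope ring_scope.
Variables (G : topGroupCarrier) (q : nat).
Implicit Types f g : G -> 'Z_q.

Lemma cont_Zq_open f (A : set 'Z_q) : cont_Zq f -> open (f @^-1` A).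
Proof.
move=> cf; have -> : f @^-1` A = \bigcup_(a in A) f @^-1` [set a].
  by apply/seteqP; split=> [x Ax|x [a Aa /= ->]] //; exists (f x).
by apply: bigcup_open => a _; exact: cf.
Qed.

Lemma cont_Zq_closed f (A : set 'Z_q) : cont_Zq f -> closed (f @^-1` A).
Proof. by move=> cf; rewrite -openC preimage_setC; exact: cont_Zq_open. Qed.

Lemma cont_Zq_sub f g : cont_Zq f -> cont_Zq g -> cont_Zq (fun x => f x - g x).
Proof.
move=> cf cg a; rewrite openE => x /= fgx.
have : nbhs x (f @^-1` [set f x] `&` g @^-1` [set g x]).
  by apply: filterI; apply: open_nbhs_nbhs; split.
by apply: filterS => y [/= -> ->].
Qed.

Lemma cont_Zq_comp (H : topGroupCarrier) (f : H -> 'Z_q) (h : G -> H) :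
  continuous h -> cont_Zq f -> cont_Zq (f \o h).
Proof.
by move=> ch cf a; rewrite comp_preimage; exact: (continuousP h).1 ch _ (cf a).
Qed.

End ContinuousZq.

Lemma mulrn_Zp_dvd q (a : 'Z_q) m : (1 < q)%N -> (q %| m)%N -> (a *+ m = 0)%R.
Proof. by move=> q1 /dvdnP [k ->]; rewrite -mulr_natr natrM pchar_Zp // !mulr0. Qed.

Section FirstCohomology.
Local Open Scope ring_scope.
Variables (G : topGroupCarrier) (q : nat) (chi : G -> 'Z_q).
Hypothesis hchi : H1_elt chi.

Lemma H1_elt1 : chi 1%g = 0.
Proof. by apply: (@addrI _ (chi 1%g)); rewrite -hchi.2 !mulg1 addr0. Qed.

Lemma H1_eltV x : chi x^-1%g = - chi x.
Proof. by apply: (@addrI _ (chi x)); rewrite -hchi.2 mulgV H1_elt1 subrr. Qed.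

Lemma H1_eltX x n : chi (x ^+ n)%g = chi x *+ n.
Proof.
by elim: n => [|n IH]; rewrite ?expg0 ?H1_elt1 // expgS hchi.2 IH mulrS.
Qed.

Lemma H1_eltR x y : chi [~ x, y]%g = 0.
Proof. by rewrite /commg /conjg !hchi.2 !H1_eltV; ring. Qed.

Lemma H1_elt_frat2 x : (1 < q)%N -> frat2 q x -> chi x = 0.
Proof.
move=> q1; apply: (@cl_gen_min _ _ (chi @^-1` [set 0])).
- exact: cont_Zq_closed hchi.1.
- split=> [|a b /= ca cb]; first exact: H1_elt1.
  by rewrite hchi.2 H1_eltV ca cb subrr.
- move=> a [[g ->]|[g [h ->]]] /=; last exact: H1_eltR.
  by rewrite H1_eltX mulrn_Zp_dvd.
Qed.

End FirstCohomology.

Lemma dvdn_bin2_delta p s : prime p -> (0 < s)%N ->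
  (p ^ s %| 'C(delta p * p ^ s, 2))%N.
Proof.
move=> pp s0; rewrite /delta; case: eqP => [->|p2].
  by rewrite bin2 -mulnA mul2n doubleK; exact: dvdn_mulr.
rewrite mul1n bin2odd ?dvdn_mulr // oddX orbC.
by have [// | ->] := even_prime pp.
Qed.

Section CupProductDefect.
Local Open Scope ring_scope.
Variables (G : topGroupCarrier) (q n : nat) (chi psi : 'I_n -> G -> 'Z_q).
Variable T : G -> 'Z_q.
Hypotheses (q1 : (1 < q)%N) (hchi : forall i, H1_elt (chi i))
  (hpsi : forall i, H1_elt (psi i)).
Local Notation cup x y := (\sum_(i < n) chi i x * psi i y).
Hypothesis TM : forall x y, T (x * y)%g = T x + T y - cup x y.

Lemma cup_eq0l x y : (forall i, chi i x = 0) -> cup x y = 0.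
Proof. by move=> chix; apply: big1 => i _; rewrite chix mul0r. Qed.

Lemma defect1 : T 1%g = 0.
Proof.
have := TM 1%g 1%g; rewrite mulg1 cup_eq0l => [e|i]; last exact: H1_elt1.
by apply: (@addrI _ (T 1%g)); rewrite addr0 [RHS]e subr0.
Qed.

Lemma defectV x : T x^-1%g + T x = - cup x x.
Proof.
have := TM x^-1%g x; rewrite mulVg defect1 => /eqP.
rewrite eq_sym subr_eq0 => /eqP ->.
by rewrite -sumrN; apply: eq_bigr => i _; rewrite H1_eltV //; ring.
Qed.

Lemma defectX x m : T (x ^+ m)%g = T x *+ m - cup x x *+ 'C(m, 2).
Proof.
elim: m => [|m IH]; first by rewrite expg0 defect1 !mulr0n subr0.
rewrite expgS TM IH.
have -> : cup x (x ^+ m)%g = cup x x *+ m.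
  by rewrite -sumrMnl; apply: eq_bigr => i _; rewrite H1_eltX // mulrnAr.
by rewrite binS bin1 mulrS mulrnDr; ring.
Qed.

Lemma defect_frat2R x h : frat2 q x -> T [~ x, h]%g = 0.
Proof.
move=> fx; have chix i : chi i x = 0 by exact: H1_elt_frat2.
have chixV i : chi i x^-1%g = 0 by rewrite H1_eltV // chix oppr0.
rewrite /commg /conjg !TM (cup_eq0l _ chixV) (cup_eq0l _ chix).
have -> : cup h^-1%g (x * h)%g = - cup h h.
  rewrite -sumrN; apply: eq_bigr => i _.
  by rewrite (hpsi i).2 H1_eltV // (H1_elt_frat2 (hpsi i) q1 fx); ring.
have /eqP Vx : T x^-1%g == - T x.
  by rewrite -subr_eq0 opprK defectV (cup_eq0l _ chix) oppr0.
have /eqP Vh : T h^-1%g == - cup h h - T h.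
  by rewrite -subr_eq0 opprB addrA defectV subrr.
by rewrite Vx Vh; ring.
Qed.

(* Here the factor [delta p] enters: [T (g ^+ (delta p * q))] loses the term
   [cup g g *+ 'C(delta p * q, 2)], which vanishes only if [q] divides it. *)
Lemma defect_frat3 p : cont_Zq T -> (q %| 'C(delta p * q, 2))%N ->
  forall x, frat3 p q x -> T x = 0.
Proof.
move=> cT qbin.
pose K := [set x | [/\ T x = 0, forall i, chi i x = 0 & forall i, psi i x = 0]].
suff sub : frat3 p q `<=` K by move=> x /sub [].
have K0 x : T x = 0 -> (forall i, chi i x = 0) -> (forall i, psi i x = 0) -> K x.
  by move=> *; split.
apply: cl_gen_min.
- have -> : K = T @^-1` [set 0] `&` \bigcap_(i in [set: 'I_n])
      (chi i @^-1` [set 0] `&` psi i @^-1` [set 0]).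
    apply/seteqP; split=> [x [Tx cx px]|x [Tx cpx]]; first by split=> // i _; split.
    by apply: K0 => // i; have [] := cpx i I.
  apply: closedI; first exact: cont_Zq_closed.
  apply: closed_bigI => i _.
  by apply: closedI; apply: cont_Zq_closed; [exact: (hchi i).1 | exact: (hpsi i).1].
- split=> [|a b [Ta ca pa] [Tb cb pb]].
    by apply: K0; [exact: defect1 | move=> i; exact: H1_elt1 ..].
  apply: K0 => [|i|i]; last 2 first.
  + by rewrite (hchi i).2 H1_eltV // ca cb subr0.
  + by rewrite (hpsi i).2 H1_eltV // pa pb subr0.
  rewrite TM (cup_eq0l _ ca) Ta subr0 add0r.
  by have := defectV b; rewrite Tb addr0 (cup_eq0l _ cb) oppr0.
- move=> a [[g ->]|[g [h [fg ->]]]]; apply: K0 => [|i|i].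
  + by rewrite defectX !mulrn_Zp_dvd ?subr0 // dvdn_mull.
  + by rewrite H1_eltX // mulrn_Zp_dvd // dvdn_mull.
  + by rewrite H1_eltX // mulrn_Zp_dvd // dvdn_mull.
  + exact: defect_frat2R.
  + exact: H1_eltR.
  + exact: H1_eltR.
Qed.

End CupProductDefect.

Definition coboundary (G : topGroupCarrier) q (b : G -> 'Z_q) (x y : G) : 'Z_q :=
  (b y - b (x * y)%g + b x)%R.

Section KernelCochain.
Local Open Scope ring_scope.
Variables (G1 G2 : topGroupCarrier) (q : nat) (pi : G1 -> G2) (W : set G1).
Variable T : G1 -> 'Z_q.
Hypotheses (tg1 : topological_group G1) (cG1 : compact [set: G1])
  (hG2 : hausdorff_space G2).
Hypotheses (hom : group_hom pi) (cpi : continuous pi)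
  (surj : forall y, exists x, pi x = y).
Hypotheses (oW : open W) (sW : is_subgroup W) (nW : is_normal W).
Hypothesis TW : forall x w, W w -> T (x * w)%g = T x.
Hypothesis TNr : forall x n, pi n = 1%g -> T (x * n)%g = T x + T n.
Hypothesis TNl : forall x n, pi n = 1%g -> T (n * x)%g = T n + T x.

Lemma kernel_cochain1 : T 1%g = 0.
Proof.
have := TNr 1%g (group_hom1 hom); rewrite mulg1 => e.
by apply: (@addrI _ (T 1%g)); rewrite addr0 -e.
Qed.

Lemma kernel_cochainJ y n : pi n = 1%g -> T (y^-1 * n * y)%g = T n.
Proof.
move=> pn; have pnJ : pi (y^-1 * n * y)%g = 1%g by exact: kernel_normal hom _ _ pn.
apply: (@addrI _ (T y)); rewrite -TNr //.
by rewrite !mulgA mulgV mul1g TNl // addrC.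
Qed.

Lemma coboundary_kernel x x' y y' : pi x = pi x' -> pi y = pi y' ->
  coboundary T x y = coboundary T x' y'.
Proof.
move=> pxx pyy; have kerM u u' : pi u = pi u' -> exists2 m, pi m = 1%g & u' = (u * m)%g.
  move=> puu; exists (u^-1 * u')%g; last by rewrite mulKVg.
  by rewrite hom group_homV // puu mulVg.
have [m pm ->] := kerM _ _ pxx; have [m' pm' ->] := kerM _ _ pyy.
have pmJ : pi (y^-1 * m * y)%g = 1%g by exact: kernel_normal hom _ _ pm.
rewrite /coboundary.
have -> : (x * m * (y * m'))%g = (x * y * (y^-1 * m * y) * m')%g.
  by rewrite !mulgA mulgK.
by rewrite (TNr x pm) (TNr y pm') (TNr _ pm') (TNr _ pmJ) kernel_cochainJ //; ring.
Qed.

Lemma coboundary_W x y w w' : W w -> W w' ->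
  coboundary T (x * w)%g (y * w')%g = coboundary T x y.
Proof.
move=> Ww Ww'; rewrite /coboundary.
have -> : (x * w * (y * w'))%g = (x * y * (y^-1 * w * y * w'))%g.
  by rewrite !mulgA mulgK.
have WJ : W (y^-1 * w * y * w')%g by apply: subgroupM => //; exact: nW.
by rewrite (TW x Ww) (TW y Ww') (TW _ WJ).
Qed.

Lemma cont_Zq_kernel_cochain : cont_Zq T.
Proof.
move=> a; rewrite openE => x /= Tx.
have : nbhs x [set y | W (x^-1 * y)%g].
  apply: open_nbhs_nbhs; split; first exact: open_lcoset.
  by rewrite /= mulVg; exact: subgroup1.
by apply: filterS => y /= /(TW x); rewrite mulKVg => ->.
Qed.

Lemma coboundary_descends : exists c : G2 -> G2 -> 'Z_q,
  cocycle2 c /\ forall x y, c (pi x) (pi y) = coboundary T x y.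
Proof.
have ex_pre g : exists x, pi x == g by have [x <-] := surj g; exists x.
pose sec g := xchoose (ex_pre g).
have secK g : pi (sec g) = g by exact/eqP/(xchooseP (ex_pre g)).
pose c g h := coboundary T (sec g) (sec h).
have c_pi x y : c (pi x) (pi y) = coboundary T x y.
  by apply: coboundary_kernel; rewrite secK.
exists c; split=> //; split=> [a|g h k]; last first.
  by rewrite -[g]secK -[h]secK -[k]secK -!hom !c_pi /coboundary !mulgA; ring.
rewrite openE => -[g h] /= cgh.
pose U x := pi @` [set y | W (x^-1 * y)%g].
have Ux x : nbhs (pi x) (U x).
  apply: open_nbhs_nbhs; split; first exact/epimorphism_open/open_lcoset.
  by exists x => //=; rewrite mulVg; exact: subgroup1.
exists (U (sec g), U (sec h)).
  by split; [have := Ux (sec g) | have := Ux (sec h)]; rewrite secK.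
move=> [_ _] [/= [x Wx <-] [y Wy <-]]; rewrite /= c_pi -cgh /c.
by rewrite -(mulKVg (sec g) x) -(mulKVg (sec h) y) coboundary_W.
Qed.

Lemma kernel_cochain_eq0 p : H2_decomposable G2 q -> (1 < q)%N ->
  (q %| 'C(delta p * q, 2))%N ->
  (forall n, pi n = 1%g -> frat3 p q n) -> forall n, pi n = 1%g -> T n = 0.
Proof.
move=> H2 q1 qbin N3 n pn.
have [c [cc c_pi]] := coboundary_descends.
have [k [chi [psi [b [hchi [hpsi [cb cE]]]]]]] := H2 c cc.
pose T' x := T x - b (pi x).
have hchi' i : H1_elt (chi i \o pi).
  by split=> [|x y]; [exact: cont_Zq_comp (hchi i).1 | rewrite /= hom (hchi i).2].
have hpsi' i : H1_elt (psi i \o pi).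
  by split=> [|x y]; [exact: cont_Zq_comp (hpsi i).1 | rewrite /= hom (hpsi i).2].
have T'M x y :
    T' (x * y)%g = T' x + T' y - \sum_(i < k) (chi i \o pi) x * (psi i \o pi) y.
  have := cE (pi x) (pi y); rewrite c_pi /coboundary -hom /T' /= => e.
  have -> : \sum_(i < k) chi i (pi x) * psi i (pi y) =
      T y - T (x * y)%g + T x - (b (pi y) - b (pi (x * y)%g) + b (pi x)).
    by rewrite e; ring.
  by ring.
have cT' : cont_Zq T'.
  by apply: cont_Zq_sub; [exact: cont_Zq_kernel_cochain | exact: cont_Zq_comp cb].
have T'0 := defect_frat3 q1 hchi' hpsi' T'M cT' qbin.
have := T'0 n (N3 n pn); rewrite /T' pn => /subr0_eq ->.
have := T'0 1%g (cl_gen1 _); rewrite /T' group_hom1 // kernel_cochain1 sub0r.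
by move=> /eqP; rewrite oppr_eq0 => /eqP.
Qed.

End KernelCochain.

Section CosetAction.
Local Open Scope group_scope.
Variables (G : topGroupCarrier) (W : set G) (m : nat) (r : 'I_m -> G).
Hypotheses (sW : is_subgroup W) (nW : is_normal W).
Hypothesis rW : forall x, exists! i, W ((r i)^-1 * x).

Let ex_idx x : exists i : 'I_m, `[< W ((r i)^-1 * x) >].
Proof. by have [i [Wi _]] := rW x; exists i; apply/asboolP. Qed.

Definition coset_idx x : 'I_m := xchoose (ex_idx x).

Lemma coset_idxP x : W ((r (coset_idx x))^-1 * x).
Proof. exact/asboolP/(xchooseP (ex_idx x)). Qed.

Lemma coset_idx_rep x i : W ((r i)^-1 * x) -> coset_idx x = i.
Proof.
by move=> Wi; have [j [_ uj]] := rW x; rewrite -(uj _ (coset_idxP x)) (uj _ Wi).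
Qed.

Lemma coset_idx_eq x y : coset_idx x = coset_idx y <-> W (x^-1 * y).
Proof.
split=> [e|Wxy].
  have := subgroupM sW (subgroupV sW (coset_idxP x)) (coset_idxP y).
  by rewrite e invMg invgK !mulgA mulgK.
apply/esym/coset_idx_rep; have := subgroupM sW (coset_idxP x) Wxy.
by rewrite !mulgA mulgK.
Qed.

Lemma coset_idx_r i : coset_idx (r i) = i.
Proof. by apply: coset_idx_rep; rewrite mulVg; exact: subgroup1. Qed.

Let coset_move x i := coset_idx (r i * x).

Let coset_move_inj x : injective (coset_move x).
Proof.
move=> i j /coset_idx_eq Wij; rewrite -(coset_idx_r i) -(coset_idx_r j); apply/coset_idx_eq.
by have := nW x^-1 Wij; rewrite invgK invMg !mulgA mulgV mul1g mulgK.
Qed.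

Definition coset_perm x : {perm 'I_m} := perm (@coset_move_inj x).

Lemma coset_permE x i : coset_perm x i = coset_idx (r i * x).
Proof. by rewrite permE. Qed.

Lemma coset_permM x y : coset_perm (x * y) = coset_perm x * coset_perm y.
Proof.
apply/permP => i; rewrite permM !coset_permE; apply/coset_idx_eq.
have /esym/coset_idx_eq := coset_idx_r (coset_idx (r i * x)).
by move=> /(nW y); rewrite !invMg !mulgA.
Qed.

Lemma coset_perm1 : coset_perm 1 = 1.
Proof. by apply/permP => i; rewrite coset_permE perm1 mulg1 coset_idx_r. Qed.

Lemma coset_permV x : coset_perm x^-1 = (coset_perm x)^-1.
Proof. by apply: (mulgI (coset_perm x)); rewrite -coset_permM !mulgV coset_perm1. Qed.

Lemma coset_perm_eq x y : coset_perm x = coset_perm y <-> W (x^-1 * y).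
Proof.
split=> [/(congr1 (fun s : {perm 'I_m} => s (coset_idx 1)))|Wxy].
  by rewrite !coset_permE => /coset_idx_eq; rewrite invMg !mulgA mulgVK.
by apply/permP => i; rewrite !coset_permE; apply/coset_idx_eq; rewrite invMg !mulgA mulgVK.
Qed.

Definition coset_perms : {set {perm 'I_m}} := [set coset_perm (r i) | i : 'I_m].

Lemma mem_coset_perms x : coset_perm x \in coset_perms.
Proof.
apply/imsetP; exists (coset_idx x) => //; apply/coset_perm_eq.
by have := subgroupV sW (coset_idxP x); rewrite invMg invgK.
Qed.

Lemma coset_perms_group : group_set coset_perms.
Proof.
apply/group_setP; split=> [|_ _ /imsetP [i _ ->] /imsetP [j _ ->]].
  by rewrite -coset_perm1 mem_coset_perms.
by rewrite -coset_permM mem_coset_perms.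
Qed.

Canonical coset_perms_grp := Group coset_perms_group.

Lemma card_coset_perms : #|coset_perms| = m.
Proof.
rewrite card_imset ?card_ord // => i j /coset_perm_eq /coset_idx_rep.
by rewrite coset_idx_r.
Qed.

End CosetAction.

Section InvariantCharacter.
Local Open Scope group_scope.
Variables (gT : finGroupType) (p s : nat).
Hypotheses (pp : prime p) (s0 : (0 < s)%N).

(* The generator of [N / K] is sent to [p ^ s.-1], an element of order [p]
   of ['Z_(p ^ s)]. *)
Lemma index_prime_character (N K : {group gT}) : normal K N -> #|N : K| = p ->
  exists beta : gT -> 'Z_(p ^ s),
  [/\ {in N &, forall x y, beta (x * y) = (beta x + beta y)%R},
      {in K, forall x, beta x = 0%R} &
      exists2 z, z \in N & beta z != 0%R].
Proof.
move=> nKN iK; have [sKN nK] := andP nKN.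
have q1 : (1 < p ^ s)%N by rewrite -(expn0 p) ltn_exp2l ?prime_gt1.
have [z zN zK] : exists2 z, z \in N & z \notin K.
  by apply/fintype.subsetPn; rewrite -indexg_gt1 iK prime_gt1.
pose cz := coset K z.
have ocz : #[cz] = p.
  apply: prime_nt_dvdP => //; last by rewrite -iK -card_quotient // order_dvdG ?mem_quotient.
  by rewrite order_eq1; apply: contra zK => /eqP; apply: coset_idr; exact: (fintype.subsetP nK).
have NKcz : N / K = <[cz]>.
  by apply/esym/eqP; rewrite eqEcard cycle_subG mem_quotient //= card_quotient // iK -ocz.
pose dl x := odflt 0%N (omap val [pick i : 'I_p | coset K x == cz ^+ i]).
have dlP x : x \in N -> coset K x = cz ^+ dl x.
  move=> xN; rewrite /dl; case: pickP => [i /eqP -> //|none].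
  have : coset K x \in <[cz]> by rewrite -NKcz mem_quotient.
  case/cyclePmin=> i ilt e.
  by rewrite ocz in ilt; have := none (Ordinal ilt); rewrite /= e eqxx.
pose u := (p ^ s.-1)%N; have pu : (p * u = p ^ s)%N by rewrite -expnS prednK.
pose beta x : 'Z_(p ^ s) := ((dl x * u)%N)%:R%R.
have betaE x a : x \in N -> coset K x = cz ^+ a -> beta x = ((a * u)%N)%:R%R.
  move=> xN; rewrite (dlP x xN) => /eqP; rewrite eq_expg_mod_order ocz => /eqP dla.
  by rewrite /beta -(Zp_nat_mod q1) -[RHS](Zp_nat_mod q1) -pu -!muln_modl dla.
exists beta; split.
- move=> x y xN yN; rewrite (betaE (x * y) (dl x + dl y)%N) ?groupM ?mulnDl ?natrD //.
  by rewrite coset_morphM ?(fintype.subsetP nK) // (dlP x xN) (dlP y yN) expgD.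
- by move=> x xK; rewrite (betaE x 0%N) ?(fintype.subsetP sKN) ?coset_id.
- exists z => //; rewrite (betaE z 1%N) // mul1n.
  apply/eqP => /(congr1 val); rewrite /= val_Zp_nat // modn_small.
    by apply/eqP; rewrite -lt0n expn_gt0 prime_gt0.
  by rewrite -pu -{1}(mul1n u) ltn_mul2r expn_gt0 prime_gt0 // prime_gt1.
Qed.

Lemma pgroup_invariant_character (Q N : {group gT}) : p.-group Q -> normal N Q -> N :!=: 1 ->
  exists beta : gT -> 'Z_(p ^ s),
  [/\ {in N &, forall x y, beta (x * y) = (beta x + beta y)%R},
      {in N & Q, forall x t, beta (x ^ t) = beta x} &
      exists2 z, z \in N & beta z != 0%R].
Proof.
move=> pQ nNQ N1; have sNQ := normal_sub nNQ.
have pN : p.-group N := pgroupS sNQ pQ.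
have NQ : Q \subset Q :&: 'N(N) by rewrite finset.subsetI subxx normal_norm.
have [K maxK sNQK] := @maxgroup_exists _ (fun K : {group gT} => K \proper N) [~: N, Q]%G
  (nil_comm_properl (pgroup_nil pQ) sNQ N1 NQ).
have [beta [betaM betaK betaz]] :=
  index_prime_character (p_maximal_normal pN maxK) (p_maximal_index pN maxK).
exists beta; split=> // x t xN tQ.
have xtK : [~ x, t] \in K by apply: (fintype.subsetP sNQK); exact: mem_commg.
have xtN : [~ x, t] \in N := fintype.subsetP (normal_sub (p_maximal_normal pN maxK)) _ xtK.
by rewrite conjg_mulR betaM // (betaK _ xtK) GRing.addr0.
Qed.

End InvariantCharacter.

Section KernelCochainConstruction.
Local Open Scope group_scope.
Variables (G : topGroupCarrier) (W N : set G) (m : nat) (r : 'I_m -> G).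
Hypotheses (sW : is_subgroup W) (nW : is_normal W)
  (rW : forall x, exists! i, W ((r i)^-1 * x)).
Hypotheses (sN : is_subgroup N) (nN : is_normal N).
Variables (p s : nat).
Hypotheses (pp : prime p) (s0 : (0 < s)%N) (pm : p.-nat m).

Local Notation rho := (coset_perm sW nW rW).
Local Notation Q := (coset_perms_grp sW nW rW).

Definition coset_perm_image : {set {perm 'I_m}} :=
  [set t | `[< exists n, N n /\ rho n = t >]].

Lemma mem_coset_perm_image n : N n -> rho n \in coset_perm_image.
Proof. by move=> Nn; rewrite inE; apply/asboolP; exists n. Qed.

Lemma coset_perm_imageP t : t \in coset_perm_image -> exists2 n, N n & rho n = t.
Proof. by rewrite inE => /asboolP [n [Nn <-]]; exists n. Qed.

Lemma coset_perm_image_group : group_set coset_perm_image.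
Proof.
apply/group_setP; split=> [|_ _ /coset_perm_imageP [a Na <-] /coset_perm_imageP [b Nb <-]].
  by rewrite -(coset_perm1 sW nW rW) mem_coset_perm_image //; exact: subgroup1.
by rewrite -coset_permM mem_coset_perm_image //; exact: subgroupM.
Qed.

Canonical coset_perm_image_grp := Group coset_perm_image_group.

Lemma coset_perm_image_normal : normal coset_perm_image_grp Q.
Proof.
apply/andP; split.
  by apply/fintype.subsetP => _ /coset_perm_imageP [n _ <-]; exact: mem_coset_perms.
apply/fintype.subsetP => _ /imsetP [i _ ->]; rewrite inE.
apply/fintype.subsetP => _ /imsetP [_ /coset_perm_imageP [n Nn <-] ->].
by rewrite conjgE -coset_permV -!coset_permM mem_coset_perm_image // mulgA; exact: nN.
Qed.

Lemma kernel_cochain_exists (n0 : G) : N n0 -> ~ W n0 ->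
  exists T : G -> 'Z_(p ^ s),
  [/\ forall x w, W w -> T (x * w) = T x,
      forall x n, N n -> T (x * n) = (T x + T n)%R,
      forall x n, N n -> T (n * x) = (T n + T x)%R &
      exists2 n1, N n1 & T n1 != 0%R].
Proof.
move=> Nn0 Wn0.
have pQ : p.-group Q by rewrite /pgroup card_coset_perms.
have N1 : coset_perm_image_grp :!=: 1.
  apply/trivgPn; exists (rho n0); first exact: mem_coset_perm_image.
  apply: contra_notN Wn0 => /eqP rho0.
  by have := (coset_perm_eq sW nW rW 1 n0).1; rewrite invg1 mul1g coset_perm1 rho0; apply.
have [beta [betaM betaJ [z zN betaz]]] :=
  pgroup_invariant_character pp s0 pQ coset_perm_image_normal N1.
(* [rep x] is the component in the image of [N] of [rho x], relative to the
   chosen representatives of its cosets. *)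
pose rep x := (repr (rho x *: coset_perm_image))^-1 * rho x.
have repN x : rep x \in coset_perm_image.
  have := mem_repr (rho x) (lcoset_refl coset_perm_image_grp (rho x)).
  by rewrite mem_lcoset -groupV invMg invgK.
pose T x := beta (rep x).
have TN n : N n -> T n = beta (rho n).
  move=> Nn; rewrite /T /rep lcoset_id ?mem_coset_perm_image //.
  by rewrite (repr_group coset_perm_image_grp) invg1 mul1g.
have TNr x n : N n -> T (x * n) = (T x + T n)%R.
  move=> Nn; rewrite (TN n Nn) /T /rep coset_permM lcosetM.
  rewrite (lcoset_id (mem_coset_perm_image Nn)) mulgA betaM ?mem_coset_perm_image //.
  exact: repN.
exists T; split=> // [x w Ww|x n Nn|].
- by rewrite /T /rep (_ : rho (x * w) = rho x) //; apply/esym/coset_perm_eq; rewrite mulKg.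
- have NJ : N (x^-1 * n * x) by exact: nN.
  have -> : n * x = x * (x^-1 * n * x) by rewrite !mulgA mulgV mul1g.
  rewrite TNr // (TN _ NJ) (TN _ Nn) GRing.addrC; congr (_ + _)%R.
  rewrite !coset_permM coset_permV -mulgA -conjgE.
  by apply: betaJ; [exact: mem_coset_perm_image | exact: mem_coset_perms].
- by have [n1 Nn1 rho1] := coset_perm_imageP zN; exists n1; rewrite ?TN ?rho1.
Qed.

End KernelCochainConstruction.

Theorem corollary6p2 (p s : nat) (G1 G2 : topGroupCarrier) (pi : G1 -> G2) :
  prime p -> (0 < s)%N ->
  @pro_p_group G1 p -> @pro_p_group G2 p ->
  epimorphism pi ->
  induces_iso pi (@frat2 G1 (p ^ s)) (@frat2 G2 (p ^ s)) ->
  @quot2_free G2 (p ^ s) ->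
  @H2_decomposable G2 (p ^ s) ->
  (isomorphism pi <->
   induces_iso pi (@frat3 G1 p (p ^ s)) (@frat3 G2 p (p ^ s))).
Proof.
move=> pp s0 [tg1 cG1 hG1 td1 idx1] [_ _ hG2 _ _] [hom cpi surj] _ _ H2.
split=> [|[_ frat3_pull _]]; first exact: isomorphism_induces_frat3.
have ker_frat3 n : pi n = 1%g -> frat3 p (p ^ s) n.
  move=> pn; have := frat3_pull 1%g n; rewrite group_hom1 // !invg1 !mul1g pn.
  by apply; exact: cl_gen1.
apply: injective_epimorphism_iso => // x y pxy; apply: contrapT => xy.
have pn0 : pi (x^-1 * y)%g = 1%g by rewrite hom group_homV // pxy mulVg.
have n01 : (x^-1 * y)%g <> 1%g by move=> e; apply: xy; rewrite -(mulKVg x y) e mulg1.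
have [W [oW sW nW Wn0]] := open_normal_subgroup_sep tg1 cG1 hG1 td1 n01.
have [k [r rW]] := idx1 W oW sW nW.
have pk : p.-nat (p ^ k) by rewrite pnatX pnat_id.
have [T [TW TNr TNl [n1 pn1 Tn1]]] := kernel_cochain_exists sW nW rW
  (kernel_subgroup hom) (kernel_normal hom) pp s0 pk pn0 Wn0.
have q1 : (1 < p ^ s)%N by rewrite -(expn0 p) ltn_exp2l ?prime_gt1.
by rewrite (kernel_cochain_eq0 tg1 cG1 hG2 hom cpi surj oW sW nW TW TNr TNl
  H2 q1 (dvdn_bin2_delta pp s0) ker_frat3 pn1) eqxx in Tn1.
Qed.
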